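(* Let $v=[v_1,\ldots,v_N]^\top$ be a random vector with probability density $q(v)$ and marginal densities $q_i(v_i)$, $i=1,\ldots,N$, and let $w_i\geq 0$ for $i=1,\ldots,N$. Then, for any non-negative valued function $\Psi$, \[ \int \log\Bigl(\sum_{i=1}^{N} w_i \Psi(v_i)\Bigr)\, q(v)\,dv \;\geq\; \log\Bigl(\sum_{i=1}^{N} w_i e^{\xi_i}\Bigr), \qquad\text{where}\qquad \xi_i := \int \log \Psi(v_i)\, q_i(v_i)\, dv_i . \] *)

From HB Require Import structures.
From mathcomp Require Import all_boot all_order all_algebra.
From mathcomp Require Import all_classical all_reals all_analysis.
Set Implicit Arguments. Unset Strict Implicit. Unset Printing Implicit Defensive.
Import Order.TTheory GRing.Theory Num.Theory.
Local Open Scope classical_set_scope.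
Local Open Scope ring_scope.
Local Open Scope ereal_scope.

(* For non-negative measurable f this is the integral of f against
   n-dimensional Lebesgue measure (Tonelli). *)
Fixpoint iter_leb (R : realType) (n : nat) : (n.-tuple R -> \bar R) -> \bar R :=
  match n return (n.-tuple R -> \bar R) -> \bar R with
  | 0 => fun f => f [tuple]
  | n'.+1 => fun f =>
      \int[@lebesgue_measure R]_x iter_leb (fun t : n'.-tuple R => f (cons_tuple x t))
  end.

Definition has_joint_density (R : realType) (n : nat)
    (P : probability (n.-tuple R) R) (q : n.-tuple R -> R) : Prop :=
  measurable_fun setT q /\ (forall v, (0 <= q v)%R) /\
  forall A : set (n.-tuple R), measurable A ->
    P A = iter_leb (fun v => ((\1_A v)%R * q v)%:E).

Definition has_marginal_density (R : realType) (n : nat)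
    (P : probability (n.-tuple R) R) (i : 'I_n) (qi : R -> R) : Prop :=
  measurable_fun setT qi /\ (forall x, (0 <= qi x)%R) /\
  forall A : set R, measurable A ->
    P ((fun v : n.-tuple R => tnth v i) @^-1` A) =
    \int[@lebesgue_measure R]_(x in A) (qi x)%:E.

(* xi_i := \int log Psi(v_i) q_i(v_i) dv_i  (extended-real log, log 0 = -oo) *)
Definition xi (R : realType) (qi : R -> R) (Psi : R -> R) : \bar R :=
  \int[@lebesgue_measure R]_x (lne (Psi x)%:E * (qi x)%:E).

From HB Require Import structures.
From mathcomp Require Import all_boot all_order all_algebra.
From mathcomp Require Import all_classical all_reals all_analysis.
From mathcomp Require Import measurable_realfun ring lra.
Set Implicit Arguments. Unset Strict Implicit. Unset Printing Implicit Defensive.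
Import Order.TTheory GRing.Theory Num.Theory.
Local Open Scope classical_set_scope.
Local Open Scope ring_scope.

(* Write xi_i for the mean of log Psi(v_i), and put s_i := w_i e^(xi_i),
   S := sum_i s_i.  The log-sum inequality (concavity of log) gives pointwise
     log sum_i w_i Psi(v_i) >= log S + sum_i (s_i / S) (log Psi(v_i) - xi_i),
   and the right-hand side has mean log S.  Two degenerate cases are separate:
   if xi_i = +oo for some w_i > 0, then log sum_j w_j Psi(v_j) >= log w_i +
   log Psi(v_i) has mean +oo as well; if S = 0 the left-hand side is -oo.
   Densities only serve to identify xi_i with the mean of log Psi(v_i), so the
   inequality holds on any probability space for any nonnegative measurable
   functions in place of the Psi(v_i). *)

Section log_sum.
Context (R : realType) (I : finType).

Lemma psumr_gt0_support (a b : I -> R) :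
  (forall i, 0 <= a i) -> (forall i, 0 <= b i) -> (forall i, 0 < a i -> 0 < b i) ->
  0 < \sum_i a i -> 0 < \sum_i b i.
Proof.
move=> a_ge0 b_ge0 ab A_gt0.
have /hasP[j _ /andP[_ aj_gt0]] : has (fun i => true && (0 < a i)) (index_enum I).
  by rewrite -psumr_neq0 ?gt_eqF.
apply: lt_le_trans (ab j aj_gt0) _.
by rewrite (bigD1 j) //= lerDl sumr_ge0.
Qed.

Lemma log_sum_le (a b : I -> R) :
  (forall i, 0 <= a i) -> (forall i, 0 <= b i) -> (forall i, 0 < a i -> 0 < b i) ->
  0 < \sum_i a i ->
  \sum_i a i * ln (b i / a i) <= (\sum_i a i) * ln ((\sum_i b i) / \sum_i a i).
Proof.
move=> a_ge0 b_ge0 ab A_gt0.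
have B_gt0 := psumr_gt0_support a_ge0 b_ge0 ab A_gt0.
set A := \sum_i a i in A_gt0 B_gt0 *; set B := \sum_i b i in B_gt0 *.
have ln_le_subr1 (t : R) : 0 < t -> ln t <= t - 1.
  by move=> t_gt0; have := @le_ln1Dx R (t - 1); rewrite addrCA subrr addr0; apply; lra.
have term i : a i * ln (b i / a i) <= a i * ln (B / A) + (b i * A / B - a i).
  have [->|ai_neq0] := eqVneq (a i) 0.
    by rewrite !mul0r add0r subr0 divr_ge0 ?mulr_ge0 // ltW.
  have ai_gt0 : 0 < a i by rewrite lt_def ai_neq0 a_ge0.
  have bi_gt0 := ab i ai_gt0.
  rewrite -lerBlDl -mulrBr -ln_div ?posrE ?divr_gt0 //.
  have -> : b i * A / B - a i = a i * (b i / a i / (B / A) - 1).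
    by field; rewrite !gt_eqF.
  by rewrite ler_wpM2l // ln_le_subr1 // !divr_gt0.
apply: le_trans (ler_sum _ (fun i _ => term i)) _.
rewrite big_split sumrB /= -!mulr_suml -/A -/B mulrAC divff ?gt_eqF //.
by rewrite mul1r subrr addr0.
Qed.

Lemma gibbs_ln_sum_le (w s c x : I -> R) :
  (forall i, 0 <= w i) -> (forall i, 0 <= x i) -> (forall i, 0 <= s i) ->
  (forall i, 0 < s i -> s i = w i * expR (c i) /\ 0 < x i) ->
  0 < \sum_i s i ->
  ln (\sum_i s i) + \sum_i s i / (\sum_j s j) * (ln (x i) - c i)
    <= ln (\sum_i w i * x i).
Proof.
move=> w_ge0 x_ge0 s_ge0 s_pos S_gt0.
have wx_pos i : 0 < s i -> 0 < w i * x i.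
  move=> /[dup] si_gt0 /s_pos[sE xi_gt0]; rewrite pmulr_lgt0 //.
  by rewrite -(pmulr_lgt0 _ (expR_gt0 (c i))) -sE.
have wx_ge0 i : 0 <= w i * x i by rewrite mulr_ge0.
have Y_gt0 := psumr_gt0_support s_ge0 wx_ge0 wx_pos S_gt0.
have term i : s i * ln (w i * x i / s i) = s i * (ln (x i) - c i).
  have [->|si_neq0] := eqVneq (s i) 0; first by rewrite !mul0r.
  have si_gt0 : 0 < s i by rewrite lt_def si_neq0 s_ge0.
  have [sE xi_gt0] := s_pos i si_gt0.
  have wi_gt0 : 0 < w i by rewrite -(pmulr_lgt0 _ (expR_gt0 (c i))) -sE.
  rewrite [w i * x i / s i](_ : _ = x i / expR (c i)); last first.
    by rewrite sE; field; rewrite !gt_eqF ?expR_gt0.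
  by rewrite ln_div ?posrE ?expR_gt0 // expRK.
have := log_sum_le s_ge0 wx_ge0 wx_pos S_gt0.
under eq_bigr do rewrite term.
set S := \sum_i s i in S_gt0 *; set Y := \sum_i w i * x i in Y_gt0 *.
under [X in _ + X <= _]eq_bigr do rewrite mulrAC.
rewrite -mulr_suml ln_div ?posrE // => le_sum.
by rewrite addrC -lerBrDr mulrC ler_pdivrMl.
Qed.

End log_sum.

Local Open Scope ereal_scope.

Section integral_measurable.
Context d (T : measurableType d) (R : realType) (mu : {measure set T -> \bar R}).
Implicit Types f g : T -> \bar R.

Lemma le_integral_measurable f g : measurable_fun setT f -> measurable_fun setT g ->
  (forall x, f x <= g x) -> \int[mu]_x f x <= \int[mu]_x g x.
Proof.
move=> mf mg fg; rewrite (integralE _ _ f) (integralE _ _ g).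
apply: leeB; apply: ge0_le_integral => //;
  do ?[exact: measurable_funepos|exact: measurable_funeneg] => x _.
- exact: (funepos_le (D := setT) (fun y _ => fg y) (in_setT x)).
- exact: (funeneg_le (D := setT) (fun y _ => fg y) (in_setT x)).
Qed.

Lemma integral_eq_pinftyP f : \int[mu]_x f x = +oo <->
  \int[mu]_x f^\+ x = +oo /\ \int[mu]_x f^\- x < +oo.
Proof.
rewrite integralE.
have : 0 <= \int[mu]_x f^\+ x by apply: integral_ge0 => x _; exact: funepos_ge0.
have : 0 <= \int[mu]_x f^\- x by apply: integral_ge0 => x _; exact: funeneg_ge0.
by case: (\int[mu]_x f^\- x) => [b| |]; case: (\int[mu]_x f^\+ x) => [a| |] //= _ _;
  split => [|[]] //; rewrite ?ltry.
Qed.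

Lemma fin_num_integrable f : measurable_fun setT f ->
  \int[mu]_x f x \is a fin_num -> mu.-integrable setT f.
Proof.
move=> mf; rewrite integralE => fin_f; apply/integrableP; split => //.
have pos_ge0 : 0 <= \int[mu]_x f^\+ x.
  by apply: integral_ge0 => x _; exact: funepos_ge0.
have neg_ge0 : 0 <= \int[mu]_x f^\- x.
  by apply: integral_ge0 => x _; exact: funeneg_ge0.
rewrite (_ : (fun x => `|f x|) = f^\+ \+ f^\-); last exact: fune_abse.
rewrite ge0_integralD //; [|exact: measurable_funepos|exact: measurable_funeneg].
move: pos_ge0 neg_ge0 fin_f.
by case: (\int[mu]_x f^\- x) => [b| |]; case: (\int[mu]_x f^\+ x) => [a| |] //= _ _ _;
  rewrite ltry.
Qed.

End integral_measurable.

Lemma maxe0_le_addr (R : realType) (a b : \bar R) (r : R) : (0 <= r)%R ->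
  a <= b + r%:E -> maxe a 0 <= maxe b 0 + r%:E.
Proof.
move=> r_ge0 abr; rewrite ge_max; apply/andP; split.
  by apply: le_trans abr _; rewrite leeD2r // le_max lexx.
by rewrite adde_ge0 // ?le_max ?lexx ?orbT // lee_fin.
Qed.

Lemma integral_pinfty_shift d (T : measurableType d) (R : realType)
    (mu : {finite_measure set T -> \bar R}) (f g : T -> \bar R) (c : R) :
  measurable_fun setT f -> measurable_fun setT g ->
  (forall x, f x + c%:E <= g x) ->
  \int[mu]_x f x = +oo -> \int[mu]_x g x = +oo.
Proof.
move=> mf mg fcg /integral_eq_pinftyP[fpos fneg]; apply/integral_eq_pinftyP.
have fg x : f x <= g x + `|c|%:E.
  have := fcg x; rewrite -leeBrDr // => /le_trans; apply.
  by rewrite leeD2l // lee_fin -normrN ler_norm.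
have gf x : - g x <= - f x + `|c|%:E.
  by rewrite -leeBlDr // -fin_num_oppeD // leeN2; exact: fg.
have int_c : \int[mu]_x (cst `|c|%:E) x \is a fin_num.
  by rewrite integral_cst // fin_numM // fin_num_measure.
have pos : \int[mu]_x f^\+ x <= \int[mu]_x g^\+ x + \int[mu]_x (cst `|c|%:E) x.
  rewrite -ge0_integralD //; [|exact: measurable_funepos|by move=> x _ /=].
  apply: ge0_le_integral => //; first exact: measurable_funepos.
    by apply: emeasurable_funD => //; exact: measurable_funepos.
  by move=> x _; rewrite !funeposE; exact: maxe0_le_addr.
have neg : \int[mu]_x g^\- x <= \int[mu]_x f^\- x + \int[mu]_x (cst `|c|%:E) x.
  rewrite -ge0_integralD //; [|exact: measurable_funeneg|by move=> x _ /=].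
  apply: ge0_le_integral => //; first exact: measurable_funeneg.
    by apply: emeasurable_funD => //; exact: measurable_funeneg.
  by move=> x _; rewrite !funenegE; exact: maxe0_le_addr.
split.
  by move: pos; rewrite fpos -(fineK int_c) leye_eq; case: (\int[mu]_x g^\+ x).
by apply: le_lt_trans neg _; rewrite -(fineK int_c) lte_add_pinfty ?ltry.
Qed.

Section density.
Context d (T : measurableType d) (R : realType).
Variables (nu : {finite_measure set T -> \bar R})
  (mu : {sigma_finite_measure set T -> \bar R}) (q : T -> R).
Hypotheses (mq : measurable_fun setT q)
  (nu_q : forall A, measurable A -> nu A = \int[mu]_(x in A) (q x)%:E).

Lemma ge0_integral_density (g : T -> \bar R) : measurable_fun setT g ->
  (forall x, 0 <= g x) -> \int[nu]_x g x = \int[mu]_x (g x * (q x)%:E).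
Proof.
move=> mg g_ge0.
have nu_mu : nu `<< mu.
  apply/null_content_dominatesP => A mA muA0; rewrite nu_q //.
  by apply: null_set_integral => //; exact/measurable_EFinP/measurable_funTS.
have dnu_int := Radon_Nikodym_SigmaFinite.f_integrable nu_mu.
rewrite -(Radon_Nikodym_SigmaFinite.change_of_variables nu_mu g_ge0 measurableT mg).
apply: ae_eq_integral => //.
- by apply: emeasurable_funM => //; exact: measurable_int dnu_int.
- by apply: emeasurable_funM => //; exact/measurable_EFinP.
apply: ae_eqe_mul2l; apply: integral_ae_eq => //; first exact/measurable_EFinP.
by move=> A _ mA; rewrite -Radon_Nikodym_SigmaFinite.f_integral // nu_q.
Qed.

End density.

Section funepos_mulr.
Context d (T : measurableType d) (R : realType) (f : T -> \bar R) (q : T -> R).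
Hypothesis q_ge0 : forall x, (0 <= q x)%R.

Lemma ge0_funeposMr : (fun x => f x * (q x)%:E)^\+ = (fun x => f^\+ x * (q x)%:E).
Proof.
apply/funext => x.
by rewrite !funeposE !(muleC _ (q x)%:E) maxe_pMr ?lee_fin // mule0.
Qed.

Lemma ge0_funenegMr : (fun x => f x * (q x)%:E)^\- = (fun x => f^\- x * (q x)%:E).
Proof.
apply/funext => x.
by rewrite !funenegE !(muleC _ (q x)%:E) maxe_pMr ?lee_fin // mule0 muleN.
Qed.

End funepos_mulr.

(* Valued in the carrier of [lebesgue_measure], so that the distribution of a
   coordinate can be compared with Lebesgue measure. *)
Definition coord (R : realType) (n : nat) (i : 'I_n) (v : n.-tuple R) :
  measurableTypeR R := tnth v i.

HB.instance Definition _ (R : realType) (n : nat) (i : 'I_n) :=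
  isMeasurableFun.Build _ _ _ _ (@coord R n i) (measurable_tnth i).

Lemma integral_marginal_density (R : realType) (n : nat)
    (P : probability (n.-tuple R) R) (i : 'I_n) (qi : R -> R) (g : R -> \bar R) :
  has_marginal_density P i qi -> measurable_fun setT g ->
  \int[P]_v g (tnth v i) = \int[@lebesgue_measure R]_x (g x * (qi x)%:E).
Proof.
move=> [mqi [qi_ge0 P_qi]] mg.
have ge0_marginal h : measurable_fun setT h -> (forall x, 0 <= h x) ->
    \int[P]_v h (tnth v i) = \int[@lebesgue_measure R]_x (h x * (qi x)%:E).
  move=> mh h_ge0; rewrite -(@ge0_integral_density _ _ _
    (distribution P (@coord R n i)) (@lebesgue_measure R) _ mqi P_qi) //.
  by rewrite ge0_integral_distribution.
rewrite integralE (integralE _ _ (fun x => _ * _)) ge0_funeposMr // ge0_funenegMr //.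
rewrite -!ge0_marginal //;
  [|exact (measurable_funeneg mg)|exact (measurable_funepos mg)].
by congr (_ - _); apply: eq_integral => v _; rewrite ?funeposE ?funenegE.
Qed.

Lemma measurable_lne_EFin (R : realType) :
  measurable_fun [set: R] (fun r : R => lne r%:E).
Proof.
have -> : (fun r : R => lne r%:E) = fun r => if (r <= 0)%R then -oo else (ln r)%:E.
  by apply: funext.
apply: measurable_fun_ifT.
- by apply: measurable_fun_ler => //; exact: measurable_cst.
- exact: measurable_cst.
- by apply/measurable_EFinP; exact: measurable_ln.
Qed.

Section integral_lne_sum.
Context d (T : measurableType d) (R : realType) (P : probability T R) (I : finType).
Variables (w : I -> R) (f : I -> T -> R).
Hypotheses (w_ge0 : forall i, (0 <= w i)%R) (mf : forall i, measurable_fun setT (f i))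
  (f_ge0 : forall i t, (0 <= f i t)%R).

Let X i t := lne (f i t)%:E.
Let L t := lne (\sum_i w i * f i t)%R%:E.

Let mX i : measurable_fun setT (X i).
Proof. exact: measurableT_comp (@measurable_lne_EFin R) (mf i). Qed.

Let mL : measurable_fun setT L.
Proof.
apply: measurableT_comp (@measurable_lne_EFin R) _.
by apply: measurable_sum => i; exact: measurable_funM.
Qed.

Lemma lne_term_le_lne_sum i t : (0 < w i)%R -> X i t + (ln (w i))%:E <= L t.
Proof.
move=> wi_gt0; have [fi_le0|fi_gt0] := leP (f i t) 0%R.
  by rewrite /X le0_lneNy // addNye leNye.
have le_sum : (w i * f i t <= \sum_j w j * f j t)%R.
  by rewrite (bigD1 i) //= lerDl sumr_ge0 // => j _; rewrite mulr_ge0.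
have wf_gt0 : (0 < w i * f i t)%R by rewrite mulr_gt0.
have sum_gt0 := lt_le_trans wf_gt0 le_sum.
rewrite /X /L !lne_EFin // -EFinD lee_fin addrC -lnM ?posrE //.
by rewrite ler_ln ?posrE.
Qed.

Lemma integral_lne_sum_pinfty i : (0 < w i)%R -> \int[P]_t X i t = +oo ->
  \int[P]_t L t = +oo.
Proof.
move=> wi_gt0; apply: integral_pinfty_shift (mX i) mL _ => t.
exact: lne_term_le_lne_sum.
Qed.

Section finite_case.
Variables (s c : I -> R).
Hypotheses (s_ge0 : forall i, (0 <= s i)%R)
  (s_pos : forall i, (0 < s i)%R ->
     \int[P]_t X i t = (c i)%:E /\ s i = (w i * expR (c i))%R)
  (S_gt0 : (0 < \sum_i s i)%R).

Let S := (\sum_i s i)%R.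
Let minorant t := (ln S)%:E + \sum_i (s i / S)%:E * (X i t - (c i)%:E).

Let integral_cst_prob (r : R) : \int[P]_t (cst r%:E) t = r%:E.
Proof.
by rewrite integral_cst // -[RHS]mule1; congr (_ * _); exact: probability_setT.
Qed.

Lemma centered_term_mean0 i :
  P.-integrable setT (fun t => (s i / S)%:E * (X i t - (c i)%:E)) /\
  \int[P]_t ((s i / S)%:E * (X i t - (c i)%:E)) = 0.
Proof.
have [si0|si_neq0] := eqVneq (s i) 0%R.
  have -> : (fun t => (s i / S)%:E * (X i t - (c i)%:E)) = cst 0.
    by apply/funext => t; rewrite si0 mul0r mul0e.
  by split; [exact: integrable0|exact: integral0].
have si_gt0 : (0 < s i)%R by rewrite lt_def si_neq0 s_ge0.
have [Xi_c _] := s_pos si_gt0.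
have Xi_int : P.-integrable setT (X i).
  by apply: fin_num_integrable (mX i) _; rewrite Xi_c.
have c_int : P.-integrable setT (cst (c i)%:E).
  exact: finite_measure_integrable_cst.
have Xc_int : P.-integrable setT (X i \- cst (c i)%:E) by exact: integrableB.
split; first exact: integrableZl.
by rewrite integralZl // integralB // Xi_c integral_cst_prob subee // mule0.
Qed.

Lemma integral_minorant : \int[P]_t minorant t = (ln S)%:E.
Proof.
rewrite integralD //; first last.
- by apply: integrable_sum => // i _; exact: (centered_term_mean0 i).1.
- exact: finite_measure_integrable_cst.
rewrite integral_cst_prob integral_sum //; last first.
  by move=> i; exact: (centered_term_mean0 i).1.
by rewrite big1 ?adde0 // => i _; exact: (centered_term_mean0 i).2.
Qed.

Lemma minorant_le t : minorant t <= L t.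
Proof.
have [[i [si_gt0 fi_le0]]|f_pos] := pselect (exists i, (0 < s i)%R /\ (f i t <= 0)%R).
  suff -> : minorant t = -oo by exact: leNye.
  rewrite /minorant; suff -> : \sum_j (s j / S)%:E * (X j t - (c j)%:E) = -oo.
    by rewrite addeNy.
  apply/esum_eqNyP; exists i; split => //.
  by rewrite /X le0_lneNy // addNye gt0_muleNy // lte_fin divr_gt0.
have fi_gt0 i : (0 < s i)%R -> (0 < f i t)%R.
  by move=> si_gt0; rewrite ltNge; apply/negP => fi_le0; apply: f_pos; exists i.
have wf_pos i : (0 < s i)%R -> (0 < w i * f i t)%R.
  move=> si_gt0; rewrite mulr_gt0 ?fi_gt0 //.
  by rewrite -(pmulr_lgt0 _ (expR_gt0 (c i))) -(s_pos si_gt0).2.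
have Y_gt0 : (0 < \sum_i w i * f i t)%R.
  by apply: psumr_gt0_support s_ge0 _ wf_pos S_gt0 => i; rewrite mulr_ge0.
have term i : (s i / S)%:E * (X i t - (c i)%:E) = (s i / S * (ln (f i t) - c i))%:E.
  have [->|si_neq0] := eqVneq (s i) 0%R; first by rewrite !mul0r mul0e.
  by rewrite /X lne_EFin ?fi_gt0 // lt_def si_neq0 s_ge0.
rewrite /minorant /L (eq_bigr _ (fun i _ => term i)) sumEFin -EFinD lne_EFin // lee_fin.
apply: gibbs_ln_sum_le => // i si_gt0.
by split; [exact: (s_pos si_gt0).2|exact: fi_gt0].
Qed.

Lemma ln_sum_le_integral : (ln S)%:E <= \int[P]_t L t.
Proof.
rewrite -integral_minorant; apply: le_integral_measurable mL minorant_le.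
apply: emeasurable_funD => //; apply: emeasurable_sum => i.
exact: measurable_int (centered_term_mean0 i).1.
Qed.

End finite_case.

Theorem lne_sum_expeR_integral_le :
  lne (\sum_i (w i)%:E * expeR (\int[P]_t X i t)) <= \int[P]_t L t.
Proof.
have [[i [wi_gt0 Xi_oo]]|Xi_fin] :=
  pselect (exists i, (0 < w i)%R /\ \int[P]_t X i t = +oo).
  by rewrite (integral_lne_sum_pinfty wi_gt0 Xi_oo) leey.
pose c i := fine (\int[P]_t X i t).
pose s i := fine ((w i)%:E * expeR (\int[P]_t X i t)).
have s_spec i : [/\ (w i)%:E * expeR (\int[P]_t X i t) = (s i)%:E, (0 <= s i)%R &
    ((0 < s i)%R -> \int[P]_t X i t = (c i)%:E /\ s i = (w i * expR (c i))%R)].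
  rewrite /s /c; have [wi0|wi_neq0] := eqVneq (w i) 0%R => /=.
    by rewrite wi0 mul0e; split => //; rewrite ltxx.
  case E : (\int[P]_t X i t) => [r| |] /=.
  - by rewrite mulr_ge0 ?expR_ge0.
  - by exfalso; apply: Xi_fin; exists i; rewrite lt_def wi_neq0 w_ge0.
  - by rewrite mule0 mulr0; split => //; rewrite ltxx.
have sE i : (w i)%:E * expeR (\int[P]_t X i t) = (s i)%:E by case: (s_spec i).
have s_ge0 i : (0 <= s i)%R by case: (s_spec i).
have s_pos i : (0 < s i)%R -> \int[P]_t X i t = (c i)%:E /\ s i = (w i * expR (c i))%R.
  by case: (s_spec i).
under eq_bigr do rewrite sE.
rewrite sumEFin; have [S_le0|S_gt0] := leP (\sum_i s i)%R 0%R.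
  by rewrite le0_lneNy // leNye.
by rewrite lne_EFin //; exact: ln_sum_le_integral s_ge0 s_pos S_gt0.
Qed.

End integral_lne_sum.

Theorem lemma1 (R : realType) (N : nat)
  (P : probability (N.-tuple R) R) (q : N.-tuple R -> R)
  (qm : 'I_N -> R -> R) (w : 'I_N -> R) (Psi : R -> R) :
  has_joint_density P q ->
  (forall i, has_marginal_density P i (qm i)) ->
  (forall i, (0 <= w i)%R) ->
  measurable_fun setT Psi -> (forall x, (0 <= Psi x)%R) ->
  lne (\sum_(i < N) (w i)%:E * expeR (xi (qm i) Psi))
    <= \int[P]_v lne (\sum_(i < N) w i * Psi (tnth v i))%R%:E.
Proof.
move=> _ marginal w_ge0 mPsi Psi_ge0.
have xiE i : xi (qm i) Psi = \int[P]_v lne (Psi (tnth v i))%:E.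
  rewrite /xi -(integral_marginal_density (marginal i)) //.
  exact: measurableT_comp (@measurable_lne_EFin R) mPsi.
under eq_bigr do rewrite xiE.
apply: (@lne_sum_expeR_integral_le _ _ _ P _ w (fun i v => Psi (tnth v i))) => // i.
exact: measurableT_comp mPsi (measurable_tnth i).
Qed.
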